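(* Let $r\in\mathbb{N}\setminus\{0\}$ and let \[ G=\left\langle a_1,\ldots,a_r,t_1,\ldots,t_r \;\middle|\; a_ia_j=a_ja_i,\ t_it_j=t_jt_i,\ t_i^2=1,\ t_i^{-1}a_jt_i=\begin{cases}a_j & i\neq j\\ a_i^{-1} & i=j\end{cases}\ (1\le i,j\le r)\right\rangle . \] Let $s\in\mathbb{N}\setminus\{0\}$. Then $\alpha_{G\times\mathbb{Z}^s}\sim (n\mapsto n^{r+1})$. In particular, for every $m,k\in\mathbb{N}\setminus\{0\}$ with $m\geq k$, there is a virtually abelian group of rank $m$ whose automorphic growth rate is $n\mapsto n^k$.
   Context: For a finitely generated group $G$ with finite generating set $\Sigma$, the automorphic growth function $\alpha_{G,\Sigma}\colon\mathbb{N}\to\mathbb{N}$ sends $n$ to the number of orbits of the natural action of $\operatorname{Aut}(G)$ on $G$ that contain an element of word length at most $n$ with respect to $\Sigma$. For non-decreasing non-zero functions $f,g\colon\mathbb{N}\to\mathbb{N}$ write $f\preccurlyeq g$ if there is $\lambda\in\mathbb{N}\setminus\{0\}$ with $f(n)\le\lambda g(\lambda n+\lambda)+\lambda$ for all $n$, and $f\sim g$ if $f\preccurlyeq g$ and $g\preccurlyeq f$. The $\sim$-class of $\alpha_{G,\Sigma}$ does not depend on $\Sigma$ and is denoted $\alpha_G$ (the automorphic growth rate). The rank of a finitely generated virtually abelian group is the rank of a finite-index free abelian subgroup. *)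

(* Abstract (possibly infinite) groups are encoded by a small
   record [Grp]; group presentations are encoded by their universal property. *)
From mathcomp Require Import all_boot all_order all_algebra.
Set Implicit Arguments. Unset Strict Implicit. Unset Printing Implicit Defensive.
Import GRing.Theory.
Local Open Scope ring_scope.

Record Grp := MkGrp {
  gcar :> Type;
  gmul : gcar -> gcar -> gcar;
  ginv : gcar -> gcar;
  gone : gcar;
  gmulA : forall x y z, gmul x (gmul y z) = gmul (gmul x y) z;
  gmul1 : forall x, gmul gone x = x;
  gmulV : forall x, gmul (ginv x) x = gone }.

Arguments gmul {g}. Arguments ginv {g}. Arguments gone {g}.

Definition zmodGrp (V : zmodType) : Grp :=
  @MkGrp V +%R -%R 0 (@addrA V) (@add0r V) (@addNr V).

Definition ZnGrp (s : nat) : Grp := zmodGrp 'rV[int]_s.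

Section Prod.
Variables G H : Grp.
Definition pmul (x y : G * H) : G * H := (gmul x.1 y.1, gmul x.2 y.2).
Definition pinv (x : G * H) : G * H := (ginv x.1, ginv x.2).
Definition pone : G * H := (gone, gone).
Lemma pmulA x y z : pmul x (pmul y z) = pmul (pmul x y) z.
Proof. by rewrite /pmul /= !gmulA. Qed.
Lemma pmul1 x : pmul pone x = x.
Proof. by case: x => a b; rewrite /pmul /= !gmul1. Qed.
Lemma pmulV x : pmul (pinv x) x = pone.
Proof. by rewrite /pmul /= !gmulV. Qed.
Definition prodGrp : Grp := MkGrp pmulA pmul1 pmulV.
End Prod.

Definition letter (G : Grp) (S : seq G) (l : nat * bool) : G :=
  if l.2 then ginv (nth gone S l.1) else nth gone S l.1.

Definition evalw (G : Grp) (S : seq G) (w : seq (nat * bool)) : G :=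
  foldr (fun l acc => gmul (letter S l) acc) gone w.

Definition ball (G : Grp) (S : seq G) (n : nat) (x : G) : Prop :=
  exists w : seq (nat * bool),
    [/\ all (fun l => l.1 < size S)%N w, (size w <= n)%N & evalw S w = x].

Definition generates (G : Grp) (S : seq G) : Prop :=
  forall x : G, exists n, ball S n x.

Definition is_hom (G H : Grp) (f : G -> H) : Prop :=
  forall x y, f (gmul x y) = gmul (f x) (f y).

Definition is_aut (G : Grp) (f : G -> G) : Prop := is_hom f /\ bijective f.

Definition aut_equiv (G : Grp) (x y : G) : Prop :=
  exists f : G -> G, is_aut f /\ f x = y.

Definition orbit_count (G : Grp) (S : seq G) (n N : nat) : Prop :=
  exists c : 'I_N -> G,
    [/\ forall i, ball S n (c i),
        forall i j, aut_equiv (c i) (c j) -> i = j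
      & forall x, ball S n x -> exists i, aut_equiv x (c i)].

Definition autgrowth (G : Grp) (S : seq G) (alpha : nat -> nat) : Prop :=
  forall n, orbit_count S n (alpha n).

Definition gprec (f g : nat -> nat) : Prop :=
  exists lam : nat, (0 < lam)%N /\
    forall n, (f n <= lam * g (lam * n + lam) + lam)%N.

Definition gsim (f g : nat -> nat) : Prop := gprec f g /\ gprec g f.

Definition autgrowth_rate_sim (G : Grp) (g : nat -> nat) : Prop :=
  forall S : seq G, generates S ->
    exists alpha, autgrowth S alpha /\ gsim alpha g.

Definition Grels (r : nat) (H : Grp) (a t : 'I_r -> H) : Prop :=
  [/\ forall i j, gmul (a i) (a j) = gmul (a j) (a i),
      forall i j, gmul (t i) (t j) = gmul (t j) (t i),
      forall i, gmul (t i) (t i) = gone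
    & forall i j, gmul (ginv (t i)) (gmul (a j) (t i)) =
                  (if i == j then ginv (a i) else a j)].

Definition presents (r : nat) (G : Grp) (a t : 'I_r -> G) : Prop :=
  [/\ generates ([seq a i | i <- enum 'I_r] ++ [seq t i | i <- enum 'I_r]),
      Grels a t
    & forall (H : Grp) (b u : 'I_r -> H), Grels b u ->
        exists f : G -> H, [/\ is_hom f, forall i, f (a i) = b i
                                       & forall i, f (t i) = u i]].

Definition fin_gen (H : Grp) : Prop := exists S : seq H, generates S.

Definition virt_abelian_rank (H : Grp) (m : nat) : Prop :=
  exists f : ZnGrp m -> H,
    [/\ is_hom f, injective f &
        exists p (c : 'I_p -> H), forall h : H,
          exists i (v : ZnGrp m), h = gmul (c i) (f v)].

From mathcomp Require Import all_boot all_order all_algebra zify ring.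
From Stdlib Require Import ClassicalEpsilon FunctionalExtensionality Classical.
Set Implicit Arguments. Unset Strict Implicit. Unset Printing Implicit Defensive.

(* The relations say that G is the direct product of r copies of the infinite
   dihedral group D = <a, t | t^2 = 1, t a t = a^-1>, so G x Z^s is isomorphic
   to K = D^r x Z^s; for its standard generators the word length of
   ((a^k_p t^b_p)_p, v) is sum_p (|k_p| + b_p) + |v|_1.
   Upper bound: GL_s(Z) acting on the Z^s factor moves v to (d, 0, ..., 0) with
   |d| <= |v|_1, so an orbit meeting the n-ball is determined by the (k_p, b_p)
   and d, i.e. by O(n^(r+1)) data.
   Lower bound: for a translation x = ((a^k_p)_p, v), "x . x^g is a d-th power
   for some g" forces d | 2 v_1, and "some nontrivial commutator [x, g] is a
   d-th power" forces d | 2 k_p for some p; both properties are Aut-invariant.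
   Taking v_1 in [1, M] and the k_p in the window (rM, 2rM], where divisibility
   means equality, gives M^(r+1) pairwise inequivalent elements of length O(M).
   Polynomial bounds for one generating set transfer to any other, since their
   balls are nested up to a linear change of radius. Finally D^(k-1) x Z^(m-k+1)
   has rank m and automorphic growth n^k. *)

(** * Word balls and automorphism orbits *)

Section GroupTheory.
Variable G : Grp.
Implicit Types (x y z : G) (S : seq G).

Lemma gmulrV x : gmul x (ginv x) = gone.
Proof.
rewrite -[gmul x _]gmul1 -(gmulV (ginv x)) -gmulA.
by rewrite (gmulA (ginv x) x) gmulV gmul1 gmulV.
Qed.

Lemma gmulr1 x : gmul x gone = x.
Proof. by rewrite -(gmulV x) gmulA gmulrV gmul1. Qed.

Lemma gmulKr x y : gmul (ginv x) (gmul x y) = y.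
Proof. by rewrite gmulA gmulV gmul1. Qed.

Lemma gmulVKr x y : gmul x (gmul (ginv x) y) = y.
Proof. by rewrite gmulA gmulrV gmul1. Qed.

Lemma gmulI x : injective (gmul x).
Proof. by move=> y z E; rewrite -(gmulKr x y) E gmulKr. Qed.

Lemma ginv_unique x y : gmul x y = gone -> ginv x = y.
Proof. by move=> E; apply: (@gmulI x); rewrite gmulrV E. Qed.

Lemma ginvK x : ginv (ginv x) = x.
Proof. exact/ginv_unique/gmulV. Qed.

Lemma ginvM x y : ginv (gmul x y) = gmul (ginv y) (ginv x).
Proof. by apply: ginv_unique; rewrite -gmulA gmulVKr gmulrV. Qed.

Lemma ginv1 : ginv (gone : G) = gone.
Proof. exact/ginv_unique/gmul1. Qed.

Lemma evalw_cat S w1 w2 : evalw S (w1 ++ w2) = gmul (evalw S w1) (evalw S w2).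
Proof. by elim: w1 => [|l w IH] /=; rewrite ?gmul1 // IH gmulA. Qed.

Definition invw (w : seq (nat * bool)) := rev [seq (l.1, ~~ l.2) | l <- w].

Lemma evalw_invw S w : evalw S (invw w) = ginv (evalw S w).
Proof.
elim: w => [|l w IH] /=; first by rewrite ginv1.
rewrite /invw /= rev_cons -cats1 evalw_cat -/(invw w) IH /= gmulr1 ginvM.
by rewrite /letter /=; case: l.2 => //=; rewrite ginvK.
Qed.

Lemma ball_le S m n x : (m <= n)%N -> ball S m x -> ball S n x.
Proof. by move=> le_mn [w [Sw le_w <-]]; exists w; split=> //; apply: leq_trans le_mn. Qed.

Lemma ball_one S n : ball S n gone.
Proof. by exists [::]. Qed.

Lemma ball_mul S m n x y : ball S m x -> ball S n y -> ball S (m + n) (gmul x y).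
Proof.
move=> [w [Sw le_w <-]] [w' [Sw' le_w' <-]]; exists (w ++ w').
by rewrite all_cat Sw Sw' size_cat leq_add // evalw_cat.
Qed.

Lemma ball_inv S n x : ball S n x -> ball S n (ginv x).
Proof.
move=> [w [Sw le_w <-]]; exists (invw w); rewrite evalw_invw /invw size_rev size_map.
by rewrite all_rev all_map.
Qed.

Lemma ball_letter S l : (l.1 < size S)%N -> ball S 1 (letter S l).
Proof. by move=> Sl; exists [:: l]; rewrite /= Sl gmulr1. Qed.

Lemma ball_rescale S S' c :
    (forall i, (i < size S')%N -> ball S c (nth gone S' i)) ->
  forall n x, ball S' n x -> ball S (c * n) x.
Proof.
move=> S'c n x [w [S'w le_w <-]]; elim: w n S'w le_w => [|l w IH] n /=.
  by move=> *; apply: ball_one.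
case/andP=> S'l S'w; case: n => // n le_w; rewrite mulnS.
apply: ball_mul; last exact: IH.
by rewrite /letter; case: l.2; [apply/ball_inv|]; apply: S'c.
Qed.

Lemma generates_ind S (P : G -> Prop) : generates S -> P gone ->
    (forall l x, (l.1 < size S)%N -> P x -> P (gmul (letter S l) x)) ->
  forall x, P x.
Proof.
move=> genS P1 PM x; have [_ [w [Sw _ <-]]] := genS x.
by elim: w Sw => //= l w IH /andP[Sl Sw]; apply: PM (IH Sw).
Qed.

Lemma generates_uniform_ball S : generates S ->
  forall S' : seq G, exists c, forall i, (i < size S')%N -> ball S c (nth gone S' i).
Proof.
move=> genS S'; elim: (size S') => [|k [c Sc]]; first by exists 0%N.
have [n Sn] := genS (nth gone S' k); exists (maxn c n) => i.
rewrite ltnS leq_eqVlt => /predU1P[->|lt_ik].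
  by apply: ball_le Sn; rewrite leq_maxr.
by apply: ball_le (Sc _ lt_ik); rewrite leq_maxl.
Qed.

End GroupTheory.

Section Homomorphisms.
Variables G H : Grp.
Implicit Types f : G -> H.

Lemma hom_one f : is_hom f -> f gone = gone.
Proof. by move=> homf; apply: (@gmulI _ (f gone)); rewrite -homf gmul1 gmulr1. Qed.

Lemma hom_inv f x : is_hom f -> f (ginv x) = ginv (f x).
Proof. by move=> homf; symmetry; apply: ginv_unique; rewrite -homf gmulrV hom_one. Qed.

Lemma hom_can f (g : H -> G) : is_hom f -> cancel f g -> cancel g f -> is_hom g.
Proof. by move=> homf fK gK x y; apply: (can_inj fK); rewrite homf !gK. Qed.

Lemma hom_evalw f S w : is_hom f -> f (evalw S w) = evalw (map f S) w.
Proof.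
move=> homf; elim: w => [|l w IH] /=; first exact: hom_one.
rewrite homf IH; congr gmul.
have fS : f (nth gone S l.1) = nth gone (map f S) l.1.
  case: (ltnP l.1 (size S)) => Sl; first by rewrite (nth_map gone).
  by rewrite !nth_default ?size_map ?hom_one.
by rewrite /letter; case: l.2; rewrite ?(hom_inv _ homf) fS.
Qed.

Lemma ball_hom f S n x : is_hom f -> ball S n x -> ball (map f S) n (f x).
Proof. by move=> homf [w [Sw le_w <-]]; exists w; rewrite size_map hom_evalw. Qed.

End Homomorphisms.

Section AutEquiv.
Variable G : Grp.
Implicit Types x y z : G.

Lemma aut_equiv_refl x : aut_equiv x x.
Proof. by exists id; do 2?split=> //; exists id. Qed.

Lemma aut_equiv_sym x y : aut_equiv x y -> aut_equiv y x.
Proof.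
move=> [f [[homf [g fK gK]] <-]]; exists g; split; last exact: fK.
by split; [apply: hom_can homf fK gK | exists f].
Qed.

Lemma aut_equiv_trans x y z : aut_equiv x y -> aut_equiv y z -> aut_equiv x z.
Proof.
move=> [f [[homf bijf] <-]] [g [[homg bijg] <-]]; exists (g \o f).
by do 2?split; [move=> u v /=; rewrite homf homg | apply: bij_comp].
Qed.

End AutEquiv.

Lemma exists_transversal (A : eqType) (B : Type) (R : B -> B -> Prop) (h : A -> B)
    (L : seq A) :
    (forall x, R x x) -> (forall x y, R x y -> R y x) ->
  exists N (c : 'I_N -> B),
    [/\ forall i, exists2 a, a \in L & h a = c i,
        forall i j, R (c i) (c j) -> i = j
      & forall a, a \in L -> exists i, R (h a) (c i)].
Proof.
move=> Rxx Rsym; elim: L => [|x L [N [c [cL c_inj c_cover]]]].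
  by exists 0%N; unshelve eexists; [case | split=> [[]|[]|]].
case: (classic (exists i, R (h x) (c i))) => [[i0 Ri0]|Rx].
  exists N, c; split=> // [i|a].
    by have [a La <-] := cL i; exists a; rewrite // inE La orbT.
  by rewrite inE => /predU1P[->|/c_cover]; first exists i0.
pose c' (i : 'I_N.+1) := if unlift ord_max i is Some j then c j else h x.
have c'_max : c' ord_max = h x by rewrite /c' unlift_none.
have c'_lift j : c' (lift ord_max j) = c j by rewrite /c' liftK.
exists N.+1, c'; split=> [i|i j|a].
- case: (unliftP ord_max i) => [j ->|->]; last by exists x; rewrite ?mem_head.
  by rewrite c'_lift; have [a La <-] := cL j; exists a; rewrite // inE La orbT.
- case: (unliftP ord_max i) => [i' ->|->]; case: (unliftP ord_max j) => [j' ->|->] //.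
  + by rewrite !c'_lift => /c_inj ->.
  + by rewrite c'_lift c'_max => /Rsym Ri'; case: Rx; exists i'.
  + by rewrite c'_lift c'_max => Rj'; case: Rx; exists j'.
- rewrite inE => /predU1P[->|/c_cover[i Ri]]; first by exists ord_max; rewrite c'_max.
  by exists (lift ord_max i); rewrite c'_lift.
Qed.

Fixpoint words (k n : nat) : seq (seq (nat * bool)) :=
  if n is n'.+1 then
    [::] :: [seq l :: w | l <- [seq (i, b) | i <- iota 0 k, b <- [:: true; false]],
                          w <- words k n']
  else [:: [::]].

Lemma wordsP k n w :
  reflect (all (fun l => l.1 < k)%N w /\ (size w <= n)%N) (w \in words k n).
Proof.
apply: (iffP idP).
  elim: n w => [|n IH] w; first by rewrite inE => /eqP->.
  rewrite inE => /predU1P[-> //|/allpairsP[[l w'] [kl /IH[kw' le_w'] ->]]].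
  case/allpairsP: kl => [[i b] [ki _ ->]].
  by move: ki kw' le_w' => /=; rewrite mem_iota add0n => /andP[_ ->] ->.
elim: n w => [|n IH] [|l w] [] //; rewrite ?inE ?eqxx // => /andP[kl kw] le_w.
apply/predU1P; right.
apply: (allpairs_f (fun l w => l :: w)).
  case: l kl {le_w} => i b ki; apply: (allpairs_f (fun i b => (i, b))).
    by rewrite mem_iota.
  by case: b {ki}.
exact: IH.
Qed.

Section OrbitCounts.
Variable G : Grp.
Implicit Types S : seq G.

Lemma orbit_count_exists S n : exists N, orbit_count S n N.
Proof.
have [N [c [cB c_inj c_cover]]] := exists_transversal (evalw S) (words (size S) n)
  (@aut_equiv_refl G) (@aut_equiv_sym G).
exists N, c; split=> // [i|x [w [Sw le_w <-]]].
  by have [w /wordsP[Sw le_w] <-] := cB i; exists w.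
by apply: c_cover; apply/wordsP.
Qed.

Lemma autgrowth_exists S : exists alpha, autgrowth S alpha.
Proof.
exists (fun n => proj1_sig (constructive_indefinite_description _ (orbit_count_exists S n))).
by move=> n; case: constructive_indefinite_description.
Qed.

Lemma orbit_count_le_card S n N (T : finType) (code : G -> T) :
    (forall x y, ball S n x -> ball S n y -> code x = code y -> aut_equiv x y) ->
  orbit_count S n N -> (N <= #|T|)%N.
Proof.
move=> code_ok [c [cB c_inj _]].
have /leq_card : injective (code \o c) by move=> i j /code_ok E; apply/c_inj/E.
by rewrite card_ord.
Qed.

Lemma card_le_orbit_count S n N (T : finType) (h : T -> G) :
    (forall a, ball S n (h a)) -> (forall a b, aut_equiv (h a) (h b) -> a = b) ->
  orbit_count S n N -> (#|T| <= N)%N.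
Proof.
move=> hB h_inj [c [_ c_inj c_cover]].
have idx a : {i | aut_equiv (h a) (c i)}.
  exact/constructive_indefinite_description/c_cover.
have /leq_card : injective (fun a => sval (idx a)).
  move=> a b; case: (idx a) (idx b) => i hai [j hbj] /= eq_ij; apply: h_inj.
  by apply: aut_equiv_trans hai _; rewrite eq_ij; apply: aut_equiv_sym.
by rewrite card_ord.
Qed.

Lemma orbit_count_mono S S' m n M N :
    (forall x, ball S m x -> ball S' n x) ->
  orbit_count S m M -> orbit_count S' n N -> (M <= N)%N.
Proof.
move=> sub_ball [c [cB c_inj _]] /(card_le_orbit_count (h := c)).
by rewrite card_ord; apply=> // i; apply/sub_ball/cB.
Qed.

End OrbitCounts.

Lemma aut_equiv_iso (G H : Grp) (F : G -> H) (F' : H -> G) x y :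
    is_hom F -> cancel F F' -> cancel F' F ->
  aut_equiv x y -> aut_equiv (F x) (F y).
Proof.
move=> homF FK F'K [f [[homf [f' fK f'K]] <-]]; exists (F \o f \o F').
split; last by rewrite /= FK.
split; first by move=> u v /=; rewrite (hom_can homF FK F'K) homf homF.
by exists (F \o f' \o F') => u /=; rewrite ?FK ?fK ?f'K ?F'K.
Qed.

Lemma autgrowth_rate_sim_iso (G H : Grp) (F : G -> H) (F' : H -> G) g :
    is_hom F -> cancel F F' -> cancel F' F ->
  autgrowth_rate_sim H g -> autgrowth_rate_sim G g.
Proof.
move=> homF FK F'K rateH S genS; have homF' := hom_can homF FK F'K.
have genFS : generates (map F S).
  by move=> y; have [n Sn] := genS (F' y); exists n; rewrite -[y]F'K; apply: ball_hom.
have [alpha [growth sim]] := rateH _ genFS; exists alpha; split=> // n.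
have [c [cB c_inj c_cover]] := growth n; exists (F' \o c); split=> [i|i j|x Sx].
- by have := ball_hom homF' (cB i); rewrite (mapK FK).
- by move/(aut_equiv_iso homF FK F'K); rewrite !F'K; apply: c_inj.
- have [i Fxi] := c_cover _ (ball_hom homF Sx); exists i.
  by have := aut_equiv_iso homF' F'K FK Fxi; rewrite FK.
Qed.

Lemma leq_expn2r e : {homo expn^~ e : m n / (m <= n)%N}.
Proof. by move=> m n le_mn; elim: e => // e IH; rewrite !expnS leq_mul. Qed.

Section OrbitBounds.
Variables (G : Grp) (S0 : seq G) (e : nat).

Definition few_orbits : Prop :=
  exists C, forall N, exists (T : finType) (code : G -> T),
    (#|T| <= C * N.+1 ^ e)%N /\
    forall x y, ball S0 N x -> ball S0 N y -> code x = code y -> aut_equiv x y.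

Definition many_orbits : Prop :=
  exists C, forall M, exists (T : finType) (h : T -> G),
    [/\ (M ^ e <= #|T|)%N, forall a, ball S0 (C * M) (h a)
      & forall a b, aut_equiv (h a) (h b) -> a = b].

Hypothesis genS0 : generates S0.

Lemma few_orbits_gprec (S : seq G) alpha :
  autgrowth S alpha -> few_orbits -> gprec alpha (fun n => n ^ e)%N.
Proof.
move=> growth [C codes]; have [c Sc] := generates_uniform_ball genS0 S.
have S_S0 := ball_rescale Sc.
exists (maxn 1 (maxn C c)); split=> [|n]; first by rewrite leq_maxl.
set lam := maxn 1 (maxn C c).
have [T [code [card_T code_ok]]] := codes (c * n)%N.
have le_alpha : (alpha n <= #|T|)%N.
  apply: orbit_count_le_card (growth n) => x y Sx Sy.
  exact: code_ok (S_S0 _ _ Sx) (S_S0 _ _ Sy).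
have le_C : (C <= lam)%N by rewrite !leq_max leqnn !orbT.
have le_cn : ((c * n).+1 <= lam * n + lam)%N.
  by rewrite -addn1 leq_add ?leq_mul2r ?leq_maxl // !leq_max leqnn !orbT.
apply: leq_trans le_alpha (leq_trans card_T (leq_trans _ (leq_addr lam _))).
by rewrite leq_mul // leq_expn2r.
Qed.

Lemma many_orbits_gprec (S : seq G) alpha :
  generates S -> autgrowth S alpha -> many_orbits -> gprec (fun n => n ^ e)%N alpha.
Proof.
move=> genS growth [C family]; have [c S0c] := generates_uniform_ball genS S0.
have S0_S := ball_rescale S0c.
exists (maxn 1 (c * C)); split=> [|n]; first by rewrite leq_maxl.
set lam := maxn 1 (c * C).
have [T [h [card_T hB h_inj]]] := family n.
have le_T := card_le_orbit_count (fun a => S0_S _ _ (hB a)) h_inj (growth _).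
have mono : (alpha (c * (C * n)) <= alpha (lam * n + lam))%N.
  apply: orbit_count_mono (growth _) (growth _) => x; apply: ball_le.
  by rewrite mulnA (leq_trans _ (leq_addr _ _)) // leq_mul2r leq_maxr orbT.
apply: leq_trans card_T (leq_trans le_T (leq_trans mono (leq_trans _ (leq_addr lam _)))).
exact: leq_pmull (leq_maxl 1 _).
Qed.

Lemma autgrowth_rate_sim_of_bounds :
  few_orbits -> many_orbits -> autgrowth_rate_sim G (fun n => n ^ e)%N.
Proof.
move=> few many S genS; have [alpha growth] := autgrowth_exists S.
exists alpha; split=> //; split.
  exact: few_orbits_gprec growth few.
exact: many_orbits_gprec genS growth many.
Qed.

End OrbitBounds.

Import GRing.Theory Num.Theory.
Local Open Scope ring_scope.

(** * The model D^r x Z^s and its word length *)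

(* [(k, b)] stands for [a ^ k * t ^ b] in the infinite dihedral group
   [<a, t | t ^ 2 = 1, t a t = a ^ -1>]. *)
Definition dmul (x y : int * bool) : int * bool :=
  (x.1 + (if x.2 then - y.1 else y.1), x.2 (+) y.2).
Definition dinv (x : int * bool) : int * bool := (if x.2 then x.1 else - x.1, x.2).

Lemma dmulA x y z : dmul x (dmul y z) = dmul (dmul x y) z.
Proof.
case: x y z => [k b] [l c] [m d]; rewrite /dmul /= addbA.
by congr pair; case: b; case: c => /=; ring.
Qed.

Lemma dmul1 x : dmul (0, false) x = x.
Proof. by case: x => k b; rewrite /dmul /= add0r. Qed.

Lemma dmulV x : dmul (dinv x) x = (0, false).
Proof. by case: x => k [] /=; rewrite /dmul /= ?addrN ?addNr ?addbb. Qed.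

Definition Dinf : Grp := MkGrp dmulA dmul1 dmulV.

Section PowerGroup.
Variables (I : Type) (G : Grp).

Definition fmul (x y : I -> G) : I -> G := fun i => gmul (x i) (y i).
Definition finv (x : I -> G) : I -> G := fun i => ginv (x i).

Lemma fmulA x y z : fmul x (fmul y z) = fmul (fmul x y) z.
Proof. by apply: functional_extensionality => i; apply: gmulA. Qed.

Lemma fmul1 x : fmul (fun=> gone) x = x.
Proof. by apply: functional_extensionality => i; apply: gmul1. Qed.

Lemma fmulV x : fmul (finv x) x = fun=> gone.
Proof. by apply: functional_extensionality => i; apply: gmulV. Qed.

Definition powGrp : Grp := MkGrp fmulA fmul1 fmulV.

End PowerGroup.

Definition DZ (r s : nat) : Grp := prodGrp (powGrp 'I_r Dinf) (ZnGrp s).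

Definition zrow s (j : 'I_s) (z : int) : 'rV[int]_s := \row_q (if q == j then z else 0).

Lemma sum_ord_update n (f g : 'I_n -> nat) i : (forall p, p != i -> g p = f p) ->
  (\sum_p g p + f i = \sum_p f p + g i)%N.
Proof.
move=> gf; rewrite (bigD1 i) // [X in (_ = X + _)%N](bigD1 i) //=.
by rewrite (eq_bigr f) => [|p /gf //]; lia.
Qed.

Lemma nth_map_enum (T : Type) (x0 : T) n (h : 'I_n -> T) (p : 'I_n) :
  nth x0 [seq h q | q <- enum 'I_n] p = h p.
Proof. by rewrite (nth_map p) ?size_enum_ord ?nth_ord_enum. Qed.

Lemma nth_map_enumP (T : Type) (x0 : T) n (h : 'I_n -> T) k : (k < n)%N ->
  exists p, nth x0 [seq h q | q <- enum 'I_n] k = h p.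
Proof. by move=> lt_kn; exists (Ordinal lt_kn); rewrite -(nth_map_enum x0 h). Qed.

Section WordLength.
Variables r s : nat.
Local Notation DZ := (DZ r s).
Implicit Types (x g : DZ) (d : Dinf).

Definition dsingle (p : 'I_r) d : powGrp 'I_r Dinf :=
  fun q => if q == p then d else gone.
Definition single (p : 'I_r) d : DZ := (dsingle p d, 0).
Definition zsingle (j : 'I_s) (z : int) : DZ := (gone, zrow j z).

Definition DZ_gens : seq DZ :=
  [seq single p (1, false) | p <- enum 'I_r] ++ [seq single p (0, true) | p <- enum 'I_r]
  ++ [seq zsingle j 1 | j <- enum 'I_s].

Lemma size_DZ_gens : size DZ_gens = (r + r + s)%N.
Proof. by rewrite /DZ_gens !size_cat !size_map -!enumT !size_enum_ord addnA. Qed.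

Lemma nth_DZ_gens n : (n < size DZ_gens)%N ->
  [\/ exists p, nth gone DZ_gens n = single p (1, false),
      exists p, nth gone DZ_gens n = single p (0, true)
    | exists j, nth gone DZ_gens n = zsingle j 1].
Proof.
rewrite size_DZ_gens => lt_n; rewrite /DZ_gens nth_cat size_map -?enumT size_enum_ord.
case: ifP => [lt_nr|/negbT]; first exact/Or31/nth_map_enumP.
rewrite -leqNgt => le_rn; rewrite nth_cat size_map -?enumT size_enum_ord.
case: ifP => [lt_nr|/negbT]; first by apply/Or32/nth_map_enumP; lia.
by rewrite -leqNgt => le_rrn; apply/Or33/nth_map_enumP; lia.
Qed.

Definition dnorm d : nat := (`|d.1| + d.2)%N.
Definition dznorm x : nat := (\sum_p dnorm (x.1 p) + \sum_j `|x.2 ord0 j|)%N.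

Lemma dnormV d : dnorm (dinv d) = dnorm d.
Proof. by case: d => k [] //=; rewrite /dnorm /= abszN. Qed.

Lemma dnormM d d' : (dnorm (dmul d d') <= dnorm d + dnorm d')%N.
Proof. by case: d d' => k b [l c]; rewrite /dnorm /dmul /=; case: b; case: c => /=; lia. Qed.

Lemma dznorm_single_mul p d x :
  (dznorm (gmul (single p d) x) + dnorm (x.1 p) = dznorm x + dnorm (dmul d (x.1 p)))%N.
Proof.
rewrite /dznorm /= add0r addnAC [RHS]addnAC; congr addn.
rewrite (@sum_ord_update _ (fun q => dnorm (x.1 q))) => [|q /negbTE qp].
  by rewrite /fmul /dsingle eqxx.
by rewrite /fmul /dsingle qp; congr dnorm; apply: dmul1.
Qed.

Lemma dznorm_zrow_mul j z x :
  (dznorm (gmul (zsingle j z) x) + `|x.2 ord0 j| = dznorm x + `|(z + x.2 ord0 j)%R|)%N.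
Proof.
rewrite /dznorm /= -!addnA; congr addn.
  by apply: eq_bigr => p _; congr dnorm; apply: dmul1.
rewrite (@sum_ord_update _ (fun q => `|x.2 ord0 q|%N)) => [|q /negbTE qj].
  by rewrite !mxE eqxx.
by rewrite !mxE qj add0r.
Qed.

Definition generator g : Prop :=
  (exists p d, g = single p d /\ dnorm d = 1%N) \/
  (exists j z, g = zsingle j z /\ `|z|%N = 1%N).

Lemma ginv_single p d : ginv (single p d) = single p (dinv d).
Proof.
rewrite /single /=; congr pair; last exact: oppr0.
apply: functional_extensionality => q; rewrite /finv /dsingle /=.
by case: eqP => // _; apply: ginv1.
Qed.

Lemma ginv_zsingle j z : ginv (zsingle j z) = zsingle j (- z).
Proof.
rewrite /zsingle /=; congr pair.
by apply/matrixP => i q; rewrite !mxE; case: eqP; rewrite ?oppr0.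
Qed.

Lemma generatorV g : generator g -> generator (ginv g).
Proof.
case=> [[p [d [-> d1]]]|[j [z [-> z1]]]].
  by left; exists p, (dinv d); split; [apply: ginv_single | rewrite dnormV].
by right; exists j, (- z); split; [apply: ginv_zsingle | rewrite abszN].
Qed.

Lemma letter_DZ_gens_generator l : (l.1 < size DZ_gens)%N -> generator (letter DZ_gens l).
Proof.
move=> /nth_DZ_gens Sl; suff : generator (nth gone DZ_gens l.1).
  by rewrite /letter; case: l.2 => //; apply: generatorV.
by case: Sl => [[p ->]|[p ->]|[j ->]];
  [left; exists p, (1, false) | left; exists p, (0, true) | right; exists j, 1].
Qed.

Lemma ball_generator g : generator g -> ball DZ_gens 1 g.
Proof.
have ball_nth n x : (n < r + r + s)%N -> nth gone DZ_gens n = x -> ball DZ_gens 1 x.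
  by rewrite -size_DZ_gens => ltn <-; apply: (ball_letter (l := (n, false))).
have nth_gens_cat n : nth gone DZ_gens (r + n)%N =
    nth gone ([seq single p (0, true) | p <- enum 'I_r]
              ++ [seq zsingle j 1 | j <- enum 'I_s]) n.
  by rewrite [LHS]nth_cat size_map -?enumT size_enum_ord ltnNge leq_addr addKn.
have ball_a p : ball DZ_gens 1 (single p (1, false)).
  apply: (ball_nth p); first by have := ltn_ord p; lia.
  by rewrite nth_cat size_map -?enumT size_enum_ord ltn_ord nth_map_enum.
have ball_t p : ball DZ_gens 1 (single p (0, true)).
  apply: (ball_nth (r + p)%N); first by have := ltn_ord p; lia.
  by rewrite nth_gens_cat nth_cat size_map -?enumT size_enum_ord ltn_ord nth_map_enum.
have ball_z j : ball DZ_gens 1 (zsingle j 1).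
  apply: (ball_nth (r + r + j)%N); first by have := ltn_ord j; lia.
  rewrite -addnA nth_gens_cat nth_cat size_map -?enumT size_enum_ord.
  by rewrite ltnNge leq_addr addKn nth_map_enum.
case=> [[p [[k b] [-> d1]]]|[j [z [-> z1]]]]; last first.
  have [->|->] : z = 1 \/ z = -1 by lia.
    exact: ball_z.
  by rewrite -ginv_zsingle; apply/ball_inv.
case: b d1; rewrite /dnorm /= => d1.
  by have -> : k = 0 by lia.
have [->|->] : k = 1 \/ k = -1 by lia.
  exact: ball_a.
by rewrite -[(-1, false)]/(dinv (1, false)) -ginv_single; apply/ball_inv.
Qed.

Lemma dznorm_generator_mul g x : generator g -> (dznorm (gmul g x) <= (dznorm x).+1)%N.
Proof.
case=> [[p [d [-> d1]]]|[j [z [-> z1]]]].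
  by have := dznorm_single_mul p d x; have := dnormM d (x.1 p); lia.
by have := dznorm_zrow_mul j z x; lia.
Qed.

Lemma dznorm_eq0 x : dznorm x = 0%N -> x = gone.
Proof.
move/eqP; rewrite addn_eq0 !sum_nat_eq0 => /andP[/forallP x1 /forallP x2].
case: x x1 x2 => [m v] /= m0 v0; congr pair.
  apply: functional_extensionality => p; move: (m0 p); rewrite /dnorm.
  by case: (m p) => k [] /=; rewrite ?addn1 // addn0 absz_eq0 => /eqP->.
by apply/matrixP => i j; rewrite (ord1 i) mxE; apply/eqP; rewrite -absz_eq0 v0.
Qed.

Lemma dnorm_dec d : (0 < dnorm d)%N ->
  exists2 d', dnorm d' = 1%N & (dnorm (dmul d' d) < dnorm d)%N.
Proof.
case: d => k [] /=; rewrite /dnorm /= => d_gt0.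
  by exists (0, true); rewrite /dmul //=; lia.
by case: (ltrP 0 k) => k0; [exists (-1, false) | exists (1, false)]; rewrite /dmul //=; lia.
Qed.

Lemma absz_dec (z : int) : (0 < `|z|)%N ->
  exists2 z' : int, `|z'|%N = 1%N & (`|(z' + z)%R| < `|z|)%N.
Proof. by case: (ltrP 0 z) => z0; [exists (-1) | exists 1]; lia. Qed.

Lemma dznorm_dec x : (0 < dznorm x)%N ->
  exists2 g, generator g & (dznorm (gmul g x) < dznorm x)%N.
Proof.
move=> x_gt0; have [p /dnorm_dec[d d1 dec]|x1_0] := pickP (fun p => 0 < dnorm (x.1 p))%N.
  exists (single p d); first by left; exists p, d.
  by have := dznorm_single_mul p d x; lia.
have [j /absz_dec[z z1 dec]|x2_0] := pickP (fun j => 0 < `|x.2 ord0 j|)%N.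
  exists (zsingle j z); first by right; exists j, z.
  by have := dznorm_zrow_mul j z x; lia.
move: x_gt0; rewrite /dznorm !big1 // => [j _|p _]; first by have := x2_0 j; lia.
by have := x1_0 p; lia.
Qed.

Lemma ball_DZ_gensE n x : ball DZ_gens n x <-> (dznorm x <= n)%N.
Proof.
split.
  move=> [w [Sw le_w <-]]; elim: w n Sw le_w => [|l w IH] n /=.
    by move=> *; rewrite /dznorm !big1 // => j _; rewrite mxE.
  case/andP=> Sl Sw; case: n => // n le_w.
  apply: leq_trans (dznorm_generator_mul _ (letter_DZ_gens_generator Sl)) _.
  by rewrite ltnS; apply: IH.
elim: n x => [|n IH] x le_x.
  by rewrite (@dznorm_eq0 x); [apply: ball_one | lia].
have [/dznorm_eq0->|/dznorm_dec[g gen dec]] := posnP (dznorm x); first exact: ball_one.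
rewrite -[x](gmulKr g) -add1n; apply: ball_mul; first exact/ball_generator/generatorV.
by apply: IH; lia.
Qed.

Lemma generates_DZ_gens : generates DZ_gens.
Proof. by move=> x; exists (dznorm x); apply/ball_DZ_gensE. Qed.

End WordLength.

Arguments single {r s} p d.
Arguments zsingle {r s} j z.

(** * Upper bound: normalizing the free abelian factor *)

Lemma row_unimodular_reduce n (v : 'rV[int]_n.+1) : exists d : int,
  exists2 A : 'M[int]_n.+1, A \in unitmx &
    v *m A = zrow ord0 d /\ (`|d| <= \sum_j `|v ord0 j|)%N.
Proof.
have [L uL [R uR [dd _ vLR]]] := int_Smith_normal_form v.
set d := L ord0 ord0 * dd`_0.
have dR : v = zrow ord0 d *m R.
  rewrite vLR; congr (_ *m R); apply/matrixP => i j; rewrite (ord1 i) !mxE big_ord1 !mxE.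
  by case: j => [[|j] lt_j] /=; rewrite ?mulr1n // mulr0n mulr0.
have vj j : v ord0 j = d * R ord0 j.
  rewrite dR !mxE (bigD1 ord0) //= big1 ?addr0 ?mxE ?eqxx // => k /negbTE k0.
  by rewrite mxE k0 mul0r.
exists d, (invmx R); first by rewrite unitmx_inv.
have vA : v *m invmx R = zrow ord0 d by rewrite dR mulmxK.
split=> //; have [j vj0|v0] := pickP (fun j => v ord0 j != 0); last first.
  suff -> : d = 0 by rewrite absz0.
  have {}v0 : v = 0 by apply/matrixP => i j; rewrite (ord1 i) mxE; apply/eqP/negbFE/v0.
  by move/matrixP: vA => /(_ ord0 ord0); rewrite v0 mul0mx !mxE eqxx.
rewrite (bigD1 j) //= (leq_trans _ (leq_addr _ _)) // vj abszM leq_pmulr //.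
by rewrite absz_gt0; move: vj0; rewrite vj mulf_eq0 negb_or => /andP[].
Qed.

Section UpperBound.
Variables r s : nat.
Local Notation DZ := (DZ r s.+1).
Implicit Types x y : DZ.

Definition zreduce (v : 'rV[int]_s.+1) : int :=
  proj1_sig (constructive_indefinite_description _ (row_unimodular_reduce v)).

Lemma zreduceP v : exists2 A : 'M[int]_s.+1, A \in unitmx &
  v *m A = zrow ord0 (zreduce v) /\ (`|zreduce v| <= \sum_j `|v ord0 j|)%N.
Proof. by rewrite /zreduce; case: constructive_indefinite_description. Qed.

Lemma aut_equiv_zreduce x : aut_equiv x (x.1, zrow ord0 (zreduce x.2)).
Proof.
have [A uA [xA _]] := zreduceP x.2.
exists (fun y : DZ => (y.1, y.2 *m A)); rewrite xA; split=> //; split.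
  by move=> y z; rewrite /= mulmxDl.
by exists (fun y : DZ => (y.1, y.2 *m invmx A)) => -[m v] /=; rewrite ?mulmxK ?mulmxKV.
Qed.

Definition int_code N (z : int) : bool * 'I_N.+1 := (z < 0, inord `|z|).

Lemma int_code_inj N z z' : (`|z| <= N)%N -> (`|z'| <= N)%N ->
  int_code N z = int_code N z' -> z = z'.
Proof. by move=> zN z'N [sgn /(congr1 val)]; rewrite /= !inordK ?ltnS //; lia. Qed.

Definition code N x :=
  ([ffun p => ((x.1 p).2, int_code N (x.1 p).1)], int_code N (zreduce x.2)).

Lemma code_aut_equiv N x y : ball (DZ_gens r s.+1) N x -> ball (DZ_gens r s.+1) N y ->
  code N x = code N y -> aut_equiv x y.
Proof.
have bound1 z p : ball (DZ_gens r s.+1) N z -> (`|(z.1 p).1| <= N)%N.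
  by move/ball_DZ_gensE; apply: leq_trans; rewrite /dznorm (bigD1 p) //= /dnorm; lia.
have bound2 z : ball (DZ_gens r s.+1) N z -> (`|zreduce z.2| <= N)%N.
  have [_ _ [_ le_z]] := zreduceP z.2.
  by move/ball_DZ_gensE; apply: leq_trans; rewrite (leq_trans le_z) // /dznorm leq_addl.
move=> Nx Ny xy.
have x1y1 : x.1 = y.1.
  apply: functional_extensionality => p.
  have := congr1 (fun c : {ffun 'I_r -> _} * _ => c.1 p) xy; rewrite /= !ffunE => xyp.
  apply: injective_projections; last exact: (f_equal fst xyp).
  exact: int_code_inj (bound1 x p Nx) (bound1 y p Ny) (f_equal snd xyp).
have zr := int_code_inj (bound2 x Nx) (bound2 y Ny) (f_equal snd xy).
apply: aut_equiv_trans (aut_equiv_zreduce x) _.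
by rewrite x1y1 zr; apply/aut_equiv_sym/aut_equiv_zreduce.
Qed.

Lemma few_orbits_DZ : few_orbits (DZ_gens r s.+1) r.+1.
Proof.
exists (2 * 4 ^ r)%N => N.
exists ({ffun 'I_r -> bool * (bool * 'I_N.+1)} * (bool * 'I_N.+1))%type, (code N).
split; last exact: code_aut_equiv.
rewrite card_prod card_ffun !card_prod !card_bool !card_ord expnS.
apply: eq_leq; rewrite -[4%N]/(2 * 2)%N !expnMn.
by move: (2 ^ r)%N (N.+1 ^ r)%N => a b; ring.
Qed.

End UpperBound.

(** * Lower bound: automorphism invariants of translations *)

Section AutInvariants.
Variable G : Grp.
Implicit Types x y g : G.

Definition npow x n : G := iter n (gmul x) gone.
Definition gconj x g : G := gmul (ginv g) (gmul x g).
Definition gcomm x g : G := gmul (ginv x) (gconj x g).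
Definition is_power y d := exists z, npow z d = y.

Definition conj_product_power x d := exists g, is_power (gmul x (gconj x g)) d.
Definition commutator_power x d := exists g, gcomm x g <> gone /\ is_power (gcomm x g) d.

Lemma hom_npow (f : G -> G) x n : is_hom f -> f (npow x n) = npow (f x) n.
Proof. by move=> homf; elim: n => [|n IH] /=; [apply: hom_one | rewrite homf IH]. Qed.

Lemma hom_gconj (f : G -> G) x g : is_hom f -> f (gconj x g) = gconj (f x) (f g).
Proof. by move=> homf; rewrite /gconj !homf hom_inv. Qed.

Lemma hom_gcomm (f : G -> G) x g : is_hom f -> f (gcomm x g) = gcomm (f x) (f g).
Proof. by move=> homf; rewrite /gcomm homf hom_inv // hom_gconj. Qed.

Lemma conj_product_power_aut x y d :
  aut_equiv x y -> conj_product_power x d -> conj_product_power y d.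
Proof.
move=> [f [[homf _] <-]] [g [z zx]]; exists (f g), (f z).
by rewrite -hom_npow // zx homf hom_gconj.
Qed.

Lemma commutator_power_aut x y d :
  aut_equiv x y -> commutator_power x d -> commutator_power y d.
Proof.
move=> [f [[homf [f' fK _]] <-]] [g [xg1 [z zx]]]; exists (f g); split.
  by rewrite -hom_gcomm // => /(congr1 f'); rewrite fK -(hom_one homf) fK.
by exists (f z); rewrite -hom_npow // zx hom_gcomm.
Qed.

End AutInvariants.

Lemma iter_dmul_rotation (l : int) n : iter n (dmul (l, false)) (0, false) = (l *+ n, false).
Proof. by elim: n => [|n IH] /=; rewrite ?mulr0n // IH /dmul /= mulrS. Qed.

Lemma iter_dmul_reflection (l : int) n :
  iter n (dmul (l, true)) (0, false) = if odd n then (l, true) else (0, false).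
Proof.
elim: n => [|n IH] //=; rewrite IH; case: (odd n) => /=.
  by rewrite /dmul /= addrN.
by rewrite /dmul /= oppr0 addr0.
Qed.

Lemma dconj_rotation (k : int) (g : int * bool) :
  dmul (dinv g) (dmul (k, false) g) = (if g.2 then - k else k, false).
Proof. by case: g => l [] /=; rewrite /dmul /dinv /=; congr pair; ring. Qed.

Lemma absz_mulrn (z : int) n : (`|(z *+ n)%R| = `|z| * n)%N.
Proof. by rewrite -mulr_natr abszM natz absz_nat. Qed.

Lemma mixed_radix_dvd r M q p x y : (q < r)%N -> (p < r)%N -> (x < M)%N -> (y < M)%N ->
  (((r + q) * M + x).+1 %| ((r + p) * M + y).+1)%N -> q = p /\ x = y.
Proof.
move=> lt_qr lt_pr lt_xM lt_yM /dvdnP[c E].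
have high : (((r + p) * M + y).+1 <= (r + r) * M)%N.
  by apply: leq_trans (_ : (r + p).+1 * M <= _)%N; rewrite ?leq_mul2r ?mulSn; lia.
have {}E : ((r + p) * M + y = (r + q) * M + x)%N.
  by case: c E => [|[|c]] E; rewrite ?mul0n ?mul1n in E; lia.
have := congr1 (divn^~ M) E; rewrite !divnMDl ?divn_small; lia.
Qed.

Section Translations.
Variables r s : nat.
Local Notation DZ := (DZ r s.+1).
Implicit Types x g z : DZ.

Lemma npow_DZ z n :
  npow z n = ((fun p => iter n (dmul (z.1 p)) (0, false)), z.2 *+ n).
Proof. by elim: n => [|n IH] /=; rewrite ?mulr0n // IH /= mulrS. Qed.

Definition translation x := forall p, (x.1 p).2 = false.

Lemma translation_conj_product x g : translation x ->
  gmul x (gconj x g) =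
  ((fun p => if (g.1 p).2 then (0, false) else ((x.1 p).1 *+ 2, false)), x.2 *+ 2).
Proof.
move=> tx; congr pair; last by rewrite /= [x.2 + g.2]addrC addKr mulr2n.
apply: functional_extensionality => p; rewrite /= /fmul /finv /=.
case: (x.1 p) (tx p) => k b /= ->; rewrite dconj_rotation.
by case: (g.1 p).2; rewrite /dmul /= ?addrN // mulr2n.
Qed.

Lemma translation_commutator x g : translation x ->
  gcomm x g = ((fun p => if (g.1 p).2 then (- ((x.1 p).1 *+ 2), false) else (0, false)), 0).
Proof.
move=> tx; congr pair; last by rewrite /= [x.2 + g.2]addrC addKr addNr.
apply: functional_extensionality => p; rewrite /= /fmul /finv /=.
case: (x.1 p) (tx p) => k b /= ->; rewrite dconj_rotation.
by case: (g.1 p).2; rewrite /dmul /dinv /=; congr pair; ring.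
Qed.

Lemma conj_product_power_translation x d : translation x ->
  conj_product_power x d -> (d %| `|(x.2 ord0 ord0 *+ 2)%R|)%N.
Proof.
move=> tx [g [z]]; rewrite translation_conj_product // npow_DZ => -[_].
move/matrixP/(_ ord0 ord0); rewrite !mulmxnE => <-.
by rewrite absz_mulrn dvdn_mull.
Qed.

Lemma commutator_power_translation x d : translation x ->
  commutator_power x d -> exists p, (d %| `|((x.1 p).1 *+ 2)%R|)%N.
Proof.
move=> tx [g [xg1 [z]]]; rewrite translation_commutator // npow_DZ => -[zx _].
have [p gp|no_refl] := pickP (fun p => (g.1 p).2); last first.
  case: xg1; rewrite translation_commutator //; congr pair.
  by apply: functional_extensionality => p; rewrite no_refl.
exists p; move/(congr1 (fun f => f p)): zx; rewrite /= gp.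
case: (z.1 p) => l [].
  rewrite iter_dmul_reflection; case: (odd d) => // -[/esym/eqP].
  by rewrite oppr_eq0 => /eqP->.
rewrite iter_dmul_rotation => -[/(congr1 absz)].
by rewrite abszN !absz_mulrn => <-; apply: dvdn_mull.
Qed.

End Translations.

Section SeparatedFamily.
Variables r s M : nat.
Local Notation DZ := (DZ r s.+1).
Local Notation family := ({ffun 'I_r -> 'I_M} * 'I_M)%type.

(* Heights lie in (rM, 2rM], where one divides another only if they are equal. *)
Definition height (f : {ffun 'I_r -> 'I_M}) (q : 'I_r) : nat := ((r + q) * M + f q).+1.

Definition family_elt (a : family) : DZ :=
  ((fun q => ((height a.1 q)%:Z, false)), zrow ord0 (a.2.+1)%:Z).

Lemma conj_product_power_family a : conj_product_power (family_elt a) (a.2.+1 * 2)%N.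
Proof.
exists ((fun _ => (0, true)), 0), (gone, zrow ord0 1).
rewrite translation_conj_product // npow_DZ /=; congr pair.
  by apply: functional_extensionality => p; rewrite iter_dmul_rotation mul0rn.
apply/matrixP => i j; rewrite !mulmxnE !mxE; case: (j == ord0); rewrite ?mul0rn //.
by rewrite natrM mulr_natr natz.
Qed.

Lemma commutator_power_family a q : commutator_power (family_elt a) (height a.1 q * 2)%N.
Proof.
exists ((fun p => (0, p == q)), 0); rewrite translation_commutator //; split.
  move=> /(congr1 (fun x : DZ => x.1 q)); rewrite /= eqxx => -[/eqP].
  by rewrite oppr_eq0 -mulr_natr mulf_eq0 !pnatr_eq0.
exists ((fun p => (- (p == q)%:R, false)), 0); rewrite npow_DZ; congr pair.
  apply: functional_extensionality => p; rewrite iter_dmul_rotation /=.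
  case: eqP => [->|_]; last by rewrite mul0rn.
  by rewrite mulNrn mulr1n natrM mulr_natr natz.
by rewrite mul0rn.
Qed.

Lemma family_elt_inj a b : aut_equiv (family_elt a) (family_elt b) -> a = b.
Proof.
move=> ab; have tb : translation (family_elt b) by [].
have z_b : (family_elt b).2 ord0 ord0 = (b.2.+1)%:Z by rewrite mxE eqxx.
have a2b2 : a.2 = b.2.
  have ta : translation (family_elt a) by [].
  have z_a : (family_elt a).2 ord0 ord0 = (a.2.+1)%:Z by rewrite mxE eqxx.
  have := conj_product_power_translation tb
    (conj_product_power_aut ab (conj_product_power_family a)).
  have := conj_product_power_translation ta
    (conj_product_power_aut (aut_equiv_sym ab) (conj_product_power_family b)).
  rewrite z_a z_b !absz_mulrn !absz_nat !dvdn_pmul2r // => ba ab'.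
  by apply: val_inj; apply/eqP; rewrite -eqSS eqn_dvd ab' ba.
have a1b1 : a.1 = b.1.
  apply/ffunP => q.
  have [p] := commutator_power_translation tb
    (commutator_power_aut ab (commutator_power_family a q)).
  rewrite absz_mulrn absz_nat dvdn_pmul2r // => /mixed_radix_dvd[] //; try exact: ltn_ord.
  by move=> /val_inj <- /val_inj.
by case: a b a1b1 a2b2 {ab tb z_b} => [a1 a2] [b1 b2] /= -> ->.
Qed.

Lemma height_le f q : (height f q <= (r + r) * M)%N.
Proof.
apply: leq_trans (_ : (r + q) * M + M <= _)%N.
  by rewrite /height -addnS leq_add2l ltn_ord.
by rewrite -mulSnr leq_mul2r ltn_add2l ltn_ord orbT.
Qed.

Lemma dznorm_family_elt a : (dznorm (family_elt a) <= (r * (r + r) + 1) * M)%N.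
Proof.
rewrite /dznorm (bigD1 ord0) //= [X in (_ + (_ + X))%N]big1 => [|j /negbTE j0]; last first.
  by rewrite mxE j0.
rewrite mxE eqxx addn0 absz_nat.
have sum_le : (\sum_(q < r) dnorm ((height a.1 q)%:Z, false) <= r * (r + r) * M)%N.
  rewrite -mulnA -[r in (r * _)%N]card_ord -sum_nat_const; apply: leq_sum => q _.
  by rewrite /dnorm /= addn0 height_le.
by rewrite mulnDl mul1n; apply: leq_add sum_le (ltn_ord a.2).
Qed.

End SeparatedFamily.

Lemma many_orbits_DZ r s : many_orbits (DZ_gens r s.+1) r.+1.
Proof.
exists (r * (r + r) + 1)%N => M; exists ({ffun 'I_r -> 'I_M} * 'I_M)%type, (@family_elt r s M).
split; [|move=> a | exact: family_elt_inj].
  by rewrite card_prod card_ffun !card_ord expnS mulnC.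
by apply/ball_DZ_gensE/dznorm_family_elt.
Qed.

Theorem autgrowth_rate_DZ r s : autgrowth_rate_sim (DZ r s.+1) (fun n => n ^ r.+1)%N.
Proof.
exact: autgrowth_rate_sim_of_bounds (@generates_DZ_gens r s.+1) (few_orbits_DZ r s)
  (many_orbits_DZ r s).
Qed.

(** * The presented group is D^r *)

Section Commutation.
Variable G : Grp.
Implicit Types x y z c : G.

Definition gcommute x y := gmul x y = gmul y x.

Definition zpow x (k : int) : G :=
  match k with Posz n => npow x n | Negz n => npow (ginv x) n.+1 end.

Lemma zpowS x k : gmul x (zpow x k) = zpow x (1 + k).
Proof. by case: k => [n|[|n]] /=; rewrite ?add0n ?gmulVKr ?subn1. Qed.

Lemma gcommute1 c : gcommute c gone.
Proof. by rewrite /gcommute gmul1 gmulr1. Qed.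

Lemma gcommuteM c x y : gcommute c x -> gcommute c y -> gcommute c (gmul x y).
Proof. by move=> cx cy; rewrite /gcommute gmulA cx -gmulA cy gmulA. Qed.

Lemma gcommuteV c x : gcommute c x -> gcommute c (ginv x).
Proof.
by move=> cx; apply: (@gmulI _ x); rewrite gmulVKr gmulA -cx -gmulA gmulrV gmulr1.
Qed.

Lemma gcommute_zpow c x k : gcommute c x -> gcommute c (zpow x k).
Proof.
have gcommute_npow y n : gcommute c y -> gcommute c (npow y n).
  by move=> cy; elim: n => [|n IH]; [apply: gcommute1 | apply: gcommuteM].
by move=> cx; case: k => n; apply: gcommute_npow; last apply: gcommuteV.
Qed.

Lemma conj_zpow t x k : gmul t x = gmul (ginv x) t -> gmul t (ginv x) = gmul x t ->
  gmul t (zpow x k) = gmul (zpow x (- k)) t.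
Proof.
have conj_npow y y' n : gmul t y = gmul y' t -> gmul t (npow y n) = gmul (npow y' n) t.
  move=> tyy'; elim: n => [|n IH] /=; first by rewrite gmul1 gmulr1.
  by rewrite gmulA tyy' -gmulA IH gmulA.
move=> tx txV; case: k => [[|n]|n]; first by rewrite /= gmul1 gmulr1.
  by rewrite -NegzE; apply: conj_npow.
by rewrite NegzE opprK; apply: conj_npow.
Qed.

Lemma foldr_gmul_update (I : eqType) c (F F' : I -> G) i (l : seq I) :
    uniq l -> i \in l ->
    (forall p, p != i -> gcommute c (F p)) ->
    (forall p, p != i -> F' p = F p) -> F' i = gmul c (F i) ->
  gmul c (foldr (fun p acc => gmul (F p) acc) gone l) =
  foldr (fun p acc => gmul (F' p) acc) gone l.
Proof.
move=> + + cF F'F F'i.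
have foldr_F' (l' : seq I) : i \notin l' ->
    foldr (fun p acc => gmul (F' p) acc) gone l' = foldr (fun p acc => gmul (F p) acc) gone l'.
  elim: l' => //= q l' IH; rewrite inE negb_or => /andP[qi /IH->].
  by rewrite F'F // eq_sym.
elim: l => [//|p l IH] /= /andP[pl ul] il.
have [pi|pi] := eqVneq p i; first by subst p; rewrite gmulA -F'i foldr_F'.
rewrite inE eq_sym (negbTE pi) /= in il.
by rewrite -IH // F'F // !gmulA cF.
Qed.

End Commutation.

Section NormalForm.
Variables (r : nat) (G : Grp) (a t : 'I_r -> G).
Hypothesis rels : Grels a t.

Lemma gcommute_a i j : gcommute (a i) (a j).
Proof. by case: rels. Qed.

Lemma gcommute_t i j : gcommute (t i) (t j).
Proof. by case: rels. Qed.

Lemma ginv_t i : ginv (t i) = t i.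
Proof. by apply: ginv_unique; case: rels. Qed.

Lemma t_conj_a i j : gmul (t i) (gmul (a j) (t i)) = if i == j then ginv (a i) else a j.
Proof. by case: rels => _ _ _ <-; rewrite ginv_t. Qed.

Lemma t_sq i : gmul (t i) (t i) = gone.
Proof. by case: rels. Qed.

Lemma gcommute_t_a i j : i != j -> gcommute (t i) (a j).
Proof.
move=> ij; have := t_conj_a i j; rewrite (negbTE ij) => tat.
by rewrite /gcommute -[in RHS]tat -!gmulA t_sq gmulr1.
Qed.

Lemma t_a i : gmul (t i) (a i) = gmul (ginv (a i)) (t i).
Proof. by have := t_conj_a i i; rewrite eqxx => <-; rewrite -!gmulA t_sq gmulr1. Qed.

Lemma t_aV i : gmul (t i) (ginv (a i)) = gmul (a i) (t i).
Proof.
have := congr1 ginv (t_conj_a i i); rewrite eqxx ginvK !ginvM ginv_t => tat.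
by rewrite -[in RHS]tat -!gmulA t_sq gmulr1.
Qed.

Definition nf_factor p (d : Dinf) : G :=
  gmul (zpow (a p) d.1) (if d.2 then t p else gone).

Definition nf (m : powGrp 'I_r Dinf) : G :=
  foldr (fun p acc => gmul (nf_factor p (m p)) acc) gone (enum 'I_r).

Lemma nf_one : nf gone = gone.
Proof. by rewrite /nf; elim: (enum 'I_r) => //= p l ->; rewrite /nf_factor !gmul1. Qed.

Lemma gcommute_nf_factor c p d :
  gcommute c (a p) -> gcommute c (t p) -> gcommute c (nf_factor p d).
Proof.
move=> ca ct; apply: gcommuteM; first exact: gcommute_zpow.
by case: d.2; last apply: gcommute1.
Qed.

Lemma nf_mul_a i m : nf (gmul (dsingle i (1, false)) m) = gmul (a i) (nf m).
Proof.
symmetry; apply: (foldr_gmul_update (i := i)); rewrite ?enum_uniq ?mem_enum //.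
- move=> p pi; apply: gcommute_nf_factor; first exact: gcommute_a.
  exact/esym/gcommute_t_a.
- by move=> p pi; rewrite /= /fmul /dsingle (negbTE pi); congr nf_factor; apply: dmul1.
- by rewrite /= /fmul /dsingle eqxx /nf_factor gmulA zpowS.
Qed.

Lemma nf_mul_t i m : nf (gmul (dsingle i (0, true)) m) = gmul (t i) (nf m).
Proof.
symmetry; apply: (foldr_gmul_update (i := i)); rewrite ?enum_uniq ?mem_enum //.
- move=> p pi; apply: gcommute_nf_factor; last exact: gcommute_t.
  by apply: gcommute_t_a; rewrite eq_sym.
- by move=> p pi; rewrite /= /fmul /dsingle (negbTE pi); congr nf_factor; apply: dmul1.
rewrite /= /fmul /dsingle eqxx /nf_factor /=; case: (m i) => k b /=.
rewrite add0r gmulA (conj_zpow _ (t_a i) (t_aV i)) -!gmulA; congr gmul.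
by case: b => /=; rewrite ?t_sq ?gmulr1.
Qed.

Variable f : G -> powGrp 'I_r Dinf.
Local Notation gensG := ([seq a i | i <- enum 'I_r] ++ [seq t i | i <- enum 'I_r]).

Hypotheses (genG : generates gensG)
  (homf : is_hom f) (fa : forall i, f (a i) = dsingle i (1, false))
  (ft : forall i, f (t i) = dsingle i (0, true)).

Lemma nfK : cancel f nf.
Proof.
pose Q u := forall m, nf (gmul (f u) m) = gmul u (nf m).
have QV u : Q u -> Q (ginv u).
  by move=> Qu m; apply: (@gmulI _ u); rewrite gmulVKr -Qu (hom_inv _ homf) gmulVKr.
have Qgen n : (n < r + r)%N -> Q (nth gone gensG n).
  move=> lt_n; rewrite nth_cat size_map -?enumT size_enum_ord; case: ifP => [lt_nr|/negbT].
    by have [p -> m] := nth_map_enumP gone a lt_nr; rewrite fa nf_mul_a.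
  rewrite -leqNgt => le_rn; have lt_nr : (n - r < r)%N by lia.
  by have [p -> m] := nth_map_enumP gone t lt_nr; rewrite ft nf_mul_t.
have Qall x : Q x.
  apply: (generates_ind genG) => [m|l y Sl Qy m]; first by rewrite hom_one ?gmul1.
  have Ql : Q (letter gensG l).
    move: Sl; rewrite size_cat !size_map -?enumT size_enum_ord => /Qgen.
    by rewrite /letter; case: l.2 => //; apply: QV.
  by rewrite homf -gmulA Ql Qy gmulA.
by move=> x; rewrite -[f x]gmulr1 Qall nf_one gmulr1.
Qed.

End NormalForm.

Lemma dihedral_rels r :
  Grels (fun i : 'I_r => dsingle i (1, false)) (fun i => dsingle i (0, true)).
Proof.
split=> [i j|i j|i|i j]; last case: eqVneq => [<-|ij];
  apply: functional_extensionality => p; rewrite /= /fmul /finv /dsingle.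
- by case: (p == i); case: (p == j); rewrite /dmul /= ?addr0 ?add0r.
- by case: (p == i); case: (p == j); rewrite /dmul /= ?addr0 ?add0r ?oppr0.
- by case: (p == i); rewrite /dmul /= ?addr0 ?oppr0.
- by case: (p == i); rewrite /dmul /dinv /= ?addr0 ?add0r ?oppr0.
case: (p =P i) => [->|_]; first by rewrite (negbTE ij) /dmul /dinv /= add0r addr0.
by case: (p == j); rewrite /dmul /dinv /= ?addr0 ?add0r ?oppr0.
Qed.

Lemma presented_iso_DZ r (G : Grp) (a t : 'I_r -> G) s : presents a t ->
  exists (F : prodGrp G (ZnGrp s) -> DZ r s) (F' : DZ r s -> prodGrp G (ZnGrp s)),
    [/\ is_hom F, cancel F F' & cancel F' F].
Proof.
case=> genG rels /(_ _ _ _ (dihedral_rels r))[f [homf fa ft]].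
pose F (x : prodGrp G (ZnGrp s)) : DZ r s := (f x.1, x.2).
pose F' (y : DZ r s) : prodGrp G (ZnGrp s) := (nf a t y.1, y.2).
have homF : is_hom F by move=> x y; rewrite /F /= homf.
have FK : cancel F F' by move=> [x v]; rewrite /F /F' /= (nfK rels genG homf fa ft).
exists F, F'; split=> // y.
suff [x <-] : exists x, F x = y by rewrite FK.
move: y; apply: (generates_ind (@generates_DZ_gens r s)) => [|l y Sl [x <-]].
  by exists gone; apply: hom_one.
suff [u Fu] : exists u, F u = nth gone (DZ_gens r s) l.1.
  by rewrite /letter; case: l.2; [exists (gmul (ginv u) x) | exists (gmul u x)];
    rewrite homF ?(hom_inv _ homF) Fu.
case: (nth_DZ_gens Sl) => [[p ->]|[p ->]|[j ->]].
- by exists (a p, 0); rewrite /F /= fa.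
- by exists (t p, 0); rewrite /F /= ft.
- by exists (gone, zrow j 1); rewrite /F /= (hom_one homf).
Qed.

Lemma virt_abelian_rank_DZ r s : virt_abelian_rank (DZ r s) (r + s).
Proof.
pose f (v : ZnGrp (r + s)) : DZ r s :=
  ((fun q => (v ord0 (lshift s q), false)), \row_j v ord0 (rshift r j)).
exists f; split.
- move=> v w; congr pair; last by apply/matrixP => i j; rewrite !mxE.
  by apply: functional_extensionality => q; rewrite /= /fmul /= /dmul /= !mxE.
- move=> v w /= fvw; apply/matrixP => i k; rewrite (ord1 i).
  case: (splitP k) => [q kq|j kj].
    rewrite (_ : k = lshift s q); last exact: val_inj.
    by have := congr1 (fun x : DZ r s => (x.1 q).1) fvw.
  rewrite (_ : k = rshift r j); last exact: val_inj.
  by have := congr1 (fun x : DZ r s => x.2 ord0 j) fvw; rewrite /= !mxE.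
exists #|{: {ffun 'I_r -> bool}}|.
exists (fun i => ((fun q => (0, (enum_val i : {ffun 'I_r -> bool}) q)), 0) : DZ r s).
move=> [m v]; exists (enum_rank [ffun q => (m q).2]).
exists (\row_k match split k with
                | inl q => if (m q).2 then - (m q).1 else (m q).1
                | inr j => v ord0 j end).
rewrite enum_rankK /f; congr pair.
  apply: functional_extensionality => q; rewrite /= /fmul /= /dmul /= !mxE.
  rewrite (unsplitK (inl q : 'I_r + 'I_s)) ffunE add0r.
  by case: (m q) => k [] /=; rewrite ?opprK.
by apply/matrixP => i j; rewrite (ord1 i) !mxE (unsplitK (inr j : 'I_r + 'I_s)) add0r.
Qed.

Theorem mainTheorem1 :
  (forall (r : nat), (0 < r)%N ->
   forall (G : Grp) (a t : 'I_r -> G), presents a t ->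
   forall (s : nat), (0 < s)%N ->
   autgrowth_rate_sim (prodGrp G (ZnGrp s)) (fun n => (n ^ r.+1)%N))
  /\
  (forall (m k : nat), (0 < k)%N -> (k <= m)%N ->
   exists H : Grp, [/\ fin_gen H, virt_abelian_rank H m
                     & autgrowth_rate_sim H (fun n => (n ^ k)%N)]).
Proof.
split.
  move=> r _ G a t pres [//|s] _.
  have [F [F' [homF FK F'K]]] := presented_iso_DZ s.+1 pres.
  exact: autgrowth_rate_sim_iso homF FK F'K (@autgrowth_rate_DZ r s).
move=> m [//|r] _ le_rm; exists (DZ r (m - r.+1).+1); split.
- by exists (DZ_gens r (m - r.+1).+1); apply: generates_DZ_gens.
- rewrite -[in X in virt_abelian_rank _ X](subnKC le_rm) addSnnS.
  exact: virt_abelian_rank_DZ.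
- exact: (@autgrowth_rate_DZ r (m - r.+1)).
Qed.
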